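(* Let $k$ be a positive integer, $a=6k+4$, $t=\frac{a-2}{2}$, $b=a+1$, $c=a+\frac a2$, $S=\{a,b,c\}$, $G=\langle S\rangle$. Let $A_{0,k}=\{0\}$, $B_{0,k}=\emptyset$, and for $i\in[1,t]$ let $A_{i,k}=[ia,\,ia+i]$ and $B_{i,k}=A_{i-1,k}+\{c\}$. Let $C=[(t+1)a,\infty[$ and $H_{11,k}=\bigcup_{i=0}^{t}(A_{i,k}\cup B_{i,k})\cup C$. Then: (1) $x\in G$ if and only if $x=(q+u)a+u\cdot\frac a2+r$ for some $q,r,u\in\mathbb{N}$ with $0\le r\le q$; (2) $G=H_{11,k}$; (3) $A_{i,k}<B_{i,k}$ for $i\in[0,t]$; $B_{i,k}<A_{i+1,k}$ for $i\in[0,t-1]$; $B_{t,k}<C$; (4) $H_{11,k}$ is a $3$-permutation numerical semigroup.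
   Context: $\mathbb{N}=\{0,1,2,\dots\}$. A numerical semigroup is a submonoid $G$ of $(\mathbb{N},+,0)$ with $\mathbb{N}\setminus G$ finite; $\langle S\rangle$ is the submonoid generated by $S$. Writing the elements of a numerical semigroup as $0=g_0<g_1<g_2<\cdots$, it is an $n$-permutation numerical semigroup if it is generated by $\{g_1,\dots,g_n\}$ and for every $k\in\mathbb{N}$ the tuple $(g_{kn+1}\bmod n,\dots,g_{kn+n}\bmod n)$ contains exactly one representative of each residue class mod $n$. Notation: $[u,v]=\{x\in\mathbb{N}:u\le x\le v\}$, $[u,\infty[=\{x\in\mathbb{N}:x\ge u\}$; $X+Y=\{x+y:x\in X,y\in Y\}$; $X<Y$ means $x<y$ for all $x\in X,y\in Y$ (vacuous if one of them is empty). *)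

From mathcomp Require Import all_boot.
Set Implicit Arguments. Unset Strict Implicit. Unset Printing Implicit Defensive.

Inductive gen (S : nat -> Prop) : nat -> Prop :=
  | gen0 : gen S 0
  | genS : forall x y, S x -> gen S y -> gen S (x + y).

Definition numerical_semigroup (G : nat -> Prop) : Prop :=
  G 0 /\ (forall x y, G x -> G y -> G (x + y)) /\
  (exists N, forall x, N <= x -> G x).

Definition enumerates (G : nat -> Prop) (g : nat -> nat) : Prop :=
  (forall i, g i < g i.+1) /\ (forall x, G x <-> exists i, g i = x).

Definition perm_numerical_semigroup (n : nat) (G : nat -> Prop) : Prop :=
  numerical_semigroup G /\
  exists g, enumerates G g /\
    (forall x, G x <-> gen (fun y => exists2 j, 1 <= j <= n & y = g j) x) /\
    (forall k r, r < n ->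
       exists! j, (1 <= j <= n) /\ g (k * n + j) %% n = r).

Definition interval (u v : nat) : nat -> Prop := fun x => u <= x <= v.
Definition from (u : nat) : nat -> Prop := fun x => u <= x.

Definition setadd (X Y : nat -> Prop) : nat -> Prop :=
  fun z => exists x y, X x /\ Y y /\ z = x + y.

Definition set_lt (X Y : nat -> Prop) : Prop :=
  forall x y, X x -> Y y -> x < y.

Definition pa (k : nat) : nat := 6 * k + 4.
Definition pt (k : nat) : nat := (pa k - 2) %/ 2.
Definition pb (k : nat) : nat := pa k + 1.
Definition pc (k : nat) : nat := pa k + pa k %/ 2.

Definition Sk (k : nat) : nat -> Prop :=
  fun x => x = pa k \/ x = pb k \/ x = pc k.

Definition Aik (k i : nat) : nat -> Prop :=
  if i == 0 then (fun x => x = 0) else interval (i * pa k) (i * pa k + i).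

Definition Bik (k i : nat) : nat -> Prop :=
  if i == 0 then (fun _ => False)
  else setadd (Aik k i.-1) (fun x => x = pc k).

Definition Ck (k : nat) : nat -> Prop := from ((pt k + 1) * pa k).

Definition H11 (k : nat) : nat -> Prop :=
  fun x => (exists2 i, i <= pt k & Aik k i x \/ Bik k i x) \/ Ck k x.

From mathcomp Require Import all_boot zify.

(* Write h = a/2 = 3k+2, so that the generators are 2h, 2h+1 and 3h and <S>
   consists of the numbers (q+u)2h + uh + r with r <= q.  Splitting u by
   parity, these are exactly the numbers n*2h + r (r <= n) and n*2h + h + r
   (r < n): the blocks A_n and B_n for n < h, followed by everything from h*2h
   on.  Block n has 2n+1 elements, so the j-th element of the semigroup lies
   in block isqrt j, which yields an explicit increasing enumeration g.
   Consecutive elements differ by 1 except at the two gaps of each block, and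
   because h = 2 (mod 3) every gap falling inside a window g(3m+1), g(3m+2),
   g(3m+3) has length 1 (mod 3); so each window meets every residue class
   mod 3 exactly once. *)

Lemma gen_add S x y : gen S x -> gen S y -> gen S (x + y).
Proof.
move=> gx gy; elim: gx => [|s z Ss _ IH]; first by rewrite add0n.
by rewrite -addnA; apply: genS.
Qed.

Lemma gen_mul S s n : S s -> gen S (n * s).
Proof.
move=> Ss; elim: n => [|n IH]; first exact: gen0.
by rewrite mulSn; apply: genS.
Qed.

Lemma gen_eq (S1 S2 : nat -> Prop) :
  (forall y, S1 y <-> S2 y) -> forall x, gen S1 x <-> gen S2 x.
Proof.
have sub T1 T2 : (forall y, T1 y -> T2 y) -> forall x, gen T1 x -> gen T2 x.
  by move=> T12 x; elim=> [|s z Ts _ IH]; [apply: gen0 | apply: genS (T12 _ Ts) IH].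
by move=> S12 x; split; apply: sub => y /S12.
Qed.

Lemma gen3_iff a h x :
  gen (fun y => y = a \/ y = a + 1 \/ y = a + h) x <->
  exists q r u, r <= q /\ x = (q + u) * a + u * h + r.
Proof.
split.
  elim=> [|s y Ss _ [q [r [u [rq ->]]]]]; first by exists 0, 0, 0.
  case: Ss => [->|[->|->]]; [exists q.+1, r, u | exists q.+1, r.+1, u | exists q, r, u.+1];
    split; lia.
move=> [q [r [u [rq ->]]]].
have -> : (q + u) * a + u * h + r = (q - r) * a + (r * (a + 1) + u * (a + h)).
  by rewrite -{1}(subnK rq); lia.
by apply: gen_add; [|apply: gen_add]; apply: gen_mul; tauto.
Qed.

(* Block i is the paper's A_i followed by B_i, for a = 2h; B_0 is empty. *)
Definition blockset (h x : nat) : Prop :=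
  (exists2 i, i < h & i * (2 * h) <= x <= i * (2 * h) + i \/
                      i * (2 * h) + h <= x < i * (2 * h) + h + i)
  \/ h * (2 * h) <= x.

Lemma blockset_low h n r : r <= n -> blockset h (n * (2 * h) + r).
Proof.
move=> rn; case: (ltnP n h) => [nh|hn]; first by left; exists n => //; left; lia.
by right; rewrite (leq_trans _ (leq_addr _ _)) // leq_mul2r hn orbT.
Qed.

Lemma blockset_high h n r : r < n -> blockset h (n * (2 * h) + h + r).
Proof.
move=> rn; case: (ltnP n h) => [nh|hn]; first by left; exists n => //; right; lia.
by right; rewrite -addnA (leq_trans _ (leq_addr _ _)) // leq_mul2r hn orbT.
Qed.

Lemma repr_blockset h x : 0 < h ->
  (exists q r u, r <= q /\ x = (q + u) * (2 * h) + u * h + r) <-> blockset h x.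
Proof.
move=> h0; split.
  move=> [q [r [u [rq ->]]]].
  rewrite (divn_eq u 2); set v := u %/ 2; have : u %% 2 < 2 by rewrite ltn_pmod.
  case: (u %% 2) => [|[|//]] _.
    have -> : (q + (v * 2 + 0)) * (2 * h) + (v * 2 + 0) * h + r =
              (q + 3 * v) * (2 * h) + r by lia.
    by apply: blockset_low; lia.
  have -> : (q + (v * 2 + 1)) * (2 * h) + (v * 2 + 1) * h + r =
            (q + 3 * v + 1) * (2 * h) + h + r by lia.
  by apply: blockset_high; lia.
case=> [[i ih [xA|xB]]|xC].
- by exists i, (x - i * (2 * h)), 0; split; lia.
- by exists i.-1, (x - i * (2 * h) - h), 1; split; [|rewrite addn1 prednK]; lia.
- rewrite (divn_eq x (2 * h)); set m := x %/ _; set r := x %% _.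
  have r_lt : r < 2 * h by rewrite ltn_pmod ?muln_gt0.
  have m_ge : h <= m by rewrite leq_divRL ?muln_gt0.
  case: (leqP r m) => rm; first by exists m, r, 0; split; lia.
  by exists m.-1, (r - h), 1; split; [|rewrite addn1 prednK]; lia.
Qed.

Fixpoint isqrt_below (n j : nat) : nat :=
  if n is n'.+1 then (if n * n <= j then n else isqrt_below n' j) else 0.

Definition isqrt (j : nat) : nat := isqrt_below j j.

Lemma isqrt_bounds j : isqrt j * isqrt j <= j < (isqrt j).+1 * (isqrt j).+1.
Proof.
suff below n : j < n.+1 * n.+1 ->
    isqrt_below n j * isqrt_below n j <= j < (isqrt_below n j).+1 * (isqrt_below n j).+1.
  by apply: below; nia.
elim: n => [|n IH] /= jn; first lia.
by case: ifP => [|/negbT]; [lia | rewrite -ltnNge => ?; apply: IH].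
Qed.

Lemma isqrt_unique i j : i * i <= j < i.+1 * i.+1 -> isqrt j = i.
Proof.
move=> ij; have := isqrt_bounds j; set r := isqrt j => rj.
by case: (ltngtP r i) => // [ri|ir];
  [have := leq_mul ri ri | have := leq_mul ir ir]; lia.
Qed.

Definition block_elem (h i s : nat) : nat :=
  if s <= i then i * (2 * h) + s else i * (2 * h) + h + (s - i.+1).

(* Block i has 2i+1 elements, so it starts at index i * i. *)
Definition blockset_nth (h j : nat) : nat :=
  let i := isqrt j in
  if i < h then block_elem h i (j - i * i) else h * (2 * h) + (j - h * h).

Lemma blockset_nth_block h i s :
  i < h -> s <= 2 * i -> blockset_nth h (i * i + s) = block_elem h i s.
Proof.
move=> ih si; rewrite /blockset_nth (@isqrt_unique i) ?ih ?addKn //; lia.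
Qed.

Lemma blockset_nth_tail h j :
  h * h <= j -> blockset_nth h j = h * (2 * h) + (j - h * h).
Proof.
rewrite /blockset_nth; case: ltnP => // ih hj.
have := isqrt_bounds j; have := leq_mul ih ih; lia.
Qed.

Lemma blockset_nth_next h i :
  i < h -> blockset_nth h (i.+1 * i.+1) = i.+1 * (2 * h).
Proof.
move=> ih; case: (ltnP i.+1 h) => [i1h|hi1].
  by rewrite -(addn0 (i.+1 * i.+1)) blockset_nth_block // /block_elem addn0.
by rewrite blockset_nth_tail (_ : i.+1 = h) ?subnn ?addn0 //; lia.
Qed.

Variant index_spec (h j : nat) : Prop :=
  | IndexBlock i s of i < h & s <= 2 * i & j = i * i + s
  | IndexTail of h * h <= j.

Lemma indexP h j : index_spec h j.
Proof.
case: (leqP (h * h) j) => hj; first exact: IndexTail.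
have := isqrt_bounds j; set i := isqrt j => ij.
apply: (@IndexBlock _ _ i (j - i * i)); try lia.
by rewrite ltnNge; apply/negP => hi; have := leq_mul hi hi; lia.
Qed.

Lemma blockset_nth_succ h i s : i < h -> s < 2 * i ->
  blockset_nth h (i * i + s).+1 = block_elem h i s.+1.
Proof. by move=> ih si; rewrite -addnS blockset_nth_block. Qed.

Lemma blockset_nth_mono h j : blockset_nth h j < blockset_nth h j.+1.
Proof.
case: (indexP h j) => [i s ih si ->|hj]; last by rewrite !blockset_nth_tail //; lia.
case: (ltnP s (2 * i)) => si'.
  by rewrite blockset_nth_succ // blockset_nth_block // /block_elem; do 2 case: ifP; lia.
rewrite (_ : (i * i + s).+1 = i.+1 * i.+1); last lia.
by rewrite blockset_nth_next // blockset_nth_block // /block_elem; case: ifP; lia.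
Qed.

Lemma blockset_nthP h x : blockset h x <-> exists j, blockset_nth h j = x.
Proof.
split.
  case=> [[i ih [xA|xB]]|xC].
  - exists (i * i + (x - i * (2 * h))); rewrite blockset_nth_block; try lia.
    by rewrite /block_elem; case: ifP; lia.
  - exists (i * i + (x - i * (2 * h) - h + i.+1)); rewrite blockset_nth_block; try lia.
    by rewrite /block_elem; case: ifP; lia.
  - by exists (h * h + (x - h * (2 * h))); rewrite blockset_nth_tail; lia.
move=> [j <-]; case: (indexP h j) => [i s ih si ->|hj].
  by left; exists i => //; rewrite blockset_nth_block // /block_elem; case: ifP; lia.
by right; rewrite blockset_nth_tail; lia.
Qed.

Lemma sqrn_mod3 i : i * i %% 3 = (i %% 3 != 0).
Proof.
rewrite -modnMm; have : i %% 3 < 3 by rewrite ltn_pmod.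
by case: (i %% 3) => [|[|[|]]].
Qed.

Lemma blockset_nth_step_mod3 h j : h %% 3 = 2 -> j %% 3 != 0 ->
  blockset_nth h j.+1 = blockset_nth h j + 1 %[mod 3].
Proof.
move=> h3 j3; case: (indexP h j) => [i s ih si ej|hj]; last first.
  by rewrite !blockset_nth_tail //; lia.
have := sqrn_mod3 i; rewrite ej in j3 *.
case: (ltnP s (2 * i)) => si'.
  by rewrite blockset_nth_succ // blockset_nth_block // /block_elem; do 2 case: ifP; lia.
rewrite (_ : (i * i + s).+1 = i.+1 * i.+1); last lia.
by rewrite blockset_nth_next // blockset_nth_block // /block_elem; case: ifP; lia.
Qed.

Lemma exists_unique_shift_mod3 x r : r < 3 ->
  exists! j, (1 <= j <= 3) /\ (x + j.-1) %% 3 = r.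
Proof.
move=> r3; exists ((r + 2 * (x %% 3)) %% 3).+1; split; first lia.
by move=> j; lia.
Qed.

Lemma blockset_nth_residues h m r : h %% 3 = 2 -> r < 3 ->
  exists! j, (1 <= j <= 3) /\ blockset_nth h (m * 3 + j) %% 3 = r.
Proof.
move=> h3 r3.
have shift j : 1 <= j <= 3 ->
    blockset_nth h (m * 3 + j) %% 3 = (blockset_nth h (m * 3 + 1) + j.-1) %% 3.
  move=> j13; have := @blockset_nth_step_mod3 h (m * 3 + 1) h3.
  have := @blockset_nth_step_mod3 h (m * 3 + 2) h3.
  by rewrite -!addnS; case: j j13 => [|[|[|[|]]]] //= _; lia.
have [j [[jr ej] uniq_j]] := exists_unique_shift_mod3 (blockset_nth h (m * 3 + 1)) r r3.
exists j; split; first by rewrite shift.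
by move=> j' [j'r ej']; apply: uniq_j; rewrite -shift.
Qed.

Lemma perm_numerical_semigroup_ext n (G1 G2 : nat -> Prop) :
  (forall x, G1 x <-> G2 x) ->
  perm_numerical_semigroup n G1 -> perm_numerical_semigroup n G2.
Proof.
move=> G12 [[G0 [Gadd [N GN]]] [g [[g_mono g_enum] [g_gen g_res]]]].
split; first split; [by apply/G12 | split |].
- by move=> x y /G12 Gx /G12 Gy; apply/G12; apply: Gadd.
- by exists N => x /GN /G12.
- exists g; split; [split=> // x | split=> // x]; by rewrite -G12.
Qed.

Lemma blockset_perm3 h : 1 < h -> h %% 3 = 2 ->
  perm_numerical_semigroup 3 (blockset h).
Proof.
move=> h1 h3.
have gen_blockset x :
    gen (fun y => y = 2 * h \/ y = 2 * h + 1 \/ y = 2 * h + h) x <-> blockset h x.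
  by rewrite gen3_iff repr_blockset //; lia.
split.
  split; first by apply/gen_blockset; apply: gen0.
  split=> [x y /gen_blockset Gx /gen_blockset Gy|].
    by apply/gen_blockset; apply: gen_add.
  by exists (h * (2 * h)) => x; right.
exists (blockset_nth h); split; first by split; [apply: blockset_nth_mono | apply: blockset_nthP].
split; last by move=> m r; apply: blockset_nth_residues.
move=> x; rewrite -gen_blockset; apply: gen_eq => y.
have nth s : s <= 2 -> blockset_nth h (1 + s) = block_elem h 1 s.
  by move=> s2; rewrite -(@blockset_nth_block h 1 s).
split=> [[->|[->|->]]|[j j3 ->]];
  [exists 1 | exists 2 | exists 3 | case: j j3 => [|[|[|[|]]]] // _];
  rewrite ?(nth 0) ?(nth 1) ?(nth 2) // /block_elem /=; lia.
Qed.

Lemma Aik_iff k i x : Aik k i x <-> i * pa k <= x <= i * pa k + i.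
Proof. by rewrite /Aik /interval; case: i => [|i] /=; lia. Qed.

Lemma Bik_iff k i x :
  Bik k i x <-> i * pa k + pa k %/ 2 <= x < i * pa k + pa k %/ 2 + i.
Proof.
rewrite /Bik; case: i => [|i] /=; first by split=> [[]|]; lia.
split=> [[y [z [/Aik_iff yA [-> ->]]]]|xB]; first by rewrite /pc; lia.
by exists (x - pc k), (pc k); rewrite Aik_iff /pc; lia.
Qed.

Lemma H11_blockset k x : H11 k x <-> blockset (3 * k + 2) x.
Proof.
have ha : pa k = 2 * (3 * k + 2) by rewrite /pa; lia.
have hh : pa k %/ 2 = 3 * k + 2 by rewrite /pa; lia.
have ht : pt k = 3 * k + 1 by rewrite /pt /pa; lia.
rewrite /H11 /blockset /Ck /from ht; split.
  case=> [[i it [/Aik_iff xA | /Bik_iff xB]]|xC]; [left; exists i; lia.. | right; lia].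
case=> [[i ih [xA | xB]]|xC]; last by right; lia.
all: by left; exists i; [lia | rewrite Aik_iff Bik_iff; lia].
Qed.

Theorem lemma4p11 (k : nat) (hk : 0 < k) :
  let a := pa k in let t := pt k in
  let G := gen (Sk k) in
  (* (1) *)
  (forall x, G x <->
     exists q r u, r <= q /\ x = (q + u) * a + u * (a %/ 2) + r) /\
  (* (2) *)
  (forall x, G x <-> H11 k x) /\
  (* (3) *)
  ((forall i, i <= t -> set_lt (Aik k i) (Bik k i)) /\
   (forall i, i < t -> set_lt (Bik k i) (Aik k i.+1)) /\
   set_lt (Bik k t) (Ck k)) /\
  (* (4) *)
  perm_numerical_semigroup 3 (H11 k).
Proof.
move=> a t G; subst a t G.
have ha : pa k = 2 * (3 * k + 2) by rewrite /pa; lia.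
have hh : pa k %/ 2 = 3 * k + 2 by rewrite /pa; lia.
have ht : pt k = 3 * k + 1 by rewrite /pt /pa; lia.
have part1 : forall x, gen (Sk k) x <->
    exists q r u, r <= q /\ x = (q + u) * pa k + u * (pa k %/ 2) + r.
  exact: gen3_iff.
have part2 x : gen (Sk k) x <-> H11 k x.
  rewrite part1 H11_blockset -repr_blockset; last lia.
  by rewrite hh ha.
split; first exact: part1.
split; first exact: part2.
split; first (split; last split).
- by move=> i it x y /Aik_iff xA /Bik_iff yB; lia.
- by move=> i it x y /Bik_iff xB /Aik_iff yA; lia.
- by move=> x y /Bik_iff xB; rewrite /Ck /from; lia.
apply: (@perm_numerical_semigroup_ext _ (blockset (3 * k + 2))) => [x|].
  by rewrite H11_blockset.
by apply: blockset_perm3; lia.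
Qed.
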